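(* For all pairs of states $\rho,\sigma$, $\lambda(\rho\otimes\sigma)=\max\{\lambda(\rho),\lambda(\sigma)\}$.
   Context: Fixed computational basis (product basis for tensor products); $\Delta$ the dephasing map; $R^\rho=\Delta(\rho)^{-1/2}\rho\Delta(\rho)^{-1/2}$ (inverse on the support). For a $d$-dimensional state, $\lambda(\rho)=\max\{|R^\rho_{ij}|:1\le i<j\le d,\ |R^\rho_{ij}|<1\}$, with $\lambda(\rho)=0$ if this set is empty (for $\rho\otimes\sigma$ the indices run over pairs of product basis labels, ordered arbitrarily). *)

(* Complex scalars: an arbitrary numClosedFieldType C
   (e.g. algC, or complex R for R : rcfType). *)
From mathcomp Require Import all_boot all_order all_algebra.
From mathcomp Require Export mxtens.
Set Implicit Arguments. Unset Strict Implicit. Unset Printing Implicit Defensive.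
Import Order.TTheory GRing.Theory Num.Theory.
Local Open Scope ring_scope.

Section Defs.
Variable C : numClosedFieldType.

Definition adjmx {m n} (A : 'M[C]_(m, n)) : 'M[C]_(n, m) :=
  \matrix_(i, j) (A j i)^*.

Definition is_psd {d} (A : 'M[C]_d) : Prop :=
  adjmx A = A /\ forall v : 'cV[C]_d, 0 <= (adjmx v *m A *m v) 0 0.

Definition is_state {d} (rho : 'M[C]_d) : Prop :=
  is_psd rho /\ \tr rho = 1.

Definition dephase {d} (A : 'M[C]_d) : 'M[C]_d := diag_mx (\row_i A i i).

Definition invsqrt_diag {d} (D : 'M[C]_d) : 'M[C]_d :=
  diag_mx (\row_i (if D i i == 0 then 0 else (sqrtC (D i i))^-1)).

Definition Rmat {d} (rho : 'M[C]_d) : 'M[C]_d :=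
  invsqrt_diag (dephase rho) *m rho *m invsqrt_diag (dephase rho).

(* lambda(rho) = max { |R_ij| : i < j, |R_ij| < 1 }, and 0 if the set is
   empty (all candidates are >= 0, so a max-fold starting at 0 is exact). *)
Definition lambda {d} (rho : 'M[C]_d) : C :=
  \big[Num.max/0]_(i < d) \big[Num.max/0]_(j < d | (i < j)%N && (`|Rmat rho i j| < 1))
     `|Rmat rho i j|.
End Defs.

From mathcomp Require Import all_boot all_order all_algebra.
From mathcomp Require Import mxtens.
From mathcomp Require Import ring.
Set Implicit Arguments. Unset Strict Implicit. Unset Printing Implicit Defensive.
Import Order.TTheory GRing.Theory Num.Theory.
Local Open Scope ring_scope.

(* Entrywise, R^(rho (x) sigma) = R^rho (x) R^sigma.  For a state, every entry
   of R has modulus at most 1 (Cauchy-Schwarz for positive semidefinite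
   matrices), and its diagonal entries are 0 or 1, at least one being 1 since
   the trace is 1.  Hence an entry of the tensor product of modulus < 1 is a
   product in which some factor has modulus < 1, which bounds lambda of the
   product by the maximum; conversely, multiplying by a diagonal entry equal
   to 1 embeds every entry of R^rho (resp. R^sigma) into R^(rho (x) sigma)
   with the same ordering of indices. *)

Section NonnegBigMax.
Variables (R : numDomainType) (I : eqType) (P : pred I) (F : I -> R).
Hypothesis F_ge0 : forall i, P i -> 0 <= F i.

Lemma bigmax0_ge0 r : 0 <= \big[Num.max/0]_(i <- r | P i) F i.
Proof.
elim/big_ind: _ => // x y x_ge0 y_ge0.
by rewrite comparable_le_max ?x_ge0 // real_comparable ?ger0_real.
Qed.

Lemma bigmax0_le r x :
  0 <= x -> (forall i, P i -> F i <= x) -> \big[Num.max/0]_(i <- r | P i) F i <= x.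
Proof.
move=> x_ge0 F_le.
suff /andP[] : 0 <= \big[Num.max/0]_(i <- r | P i) F i <= x by [].
elim/big_ind: _ => [|y z /andP[y_ge0 y_le] /andP[z_ge0 z_le]|i Pi].
- by rewrite lexx.
- have cmp : y >=< z by rewrite real_comparable ?ger0_real.
  by rewrite comparable_le_max ?y_ge0 // comparable_ge_max ?y_le.
- by rewrite F_ge0 ?F_le.
Qed.

Lemma le_bigmax0 r i : i \in r -> P i -> F i <= \big[Num.max/0]_(j <- r | P j) F j.
Proof.
move=> + Pi; elim: r => [|a s IHs] //; rewrite inE big_cons.
have cmp j : P j -> F j >=< \big[Num.max/0]_(k <- s | P k) F k.
  by move=> Pj; rewrite real_comparable ?ger0_real ?F_ge0 ?bigmax0_ge0.
case/orP => [/eqP<-|i_s]; first by rewrite Pi comparable_le_max ?cmp ?lexx.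
by case: ifP => [Pa|_]; rewrite ?comparable_le_max ?cmp ?IHs ?orbT.
Qed.

End NonnegBigMax.

Section PositiveSemidefinite.
Variables (C : numClosedFieldType) (d : nat) (A : 'M[C]_d).
Hypothesis A_psd : is_psd A.

Lemma psd_conj i j : A j i = (A i j)^*.
Proof. by case: A_psd => A_herm _; rewrite -{1}A_herm mxE. Qed.

Lemma psd_form2_ge0 i j x y : i != j ->
  0 <= x^* * A i i * x + x^* * A i j * y + y^* * A j i * x + y^* * A j j * y.
Proof.
move=> ij; case: A_psd => _ /(_ (\col_k (if k == i then x else if k == j then y else 0))).
have sum2 (G : 'I_d -> C) : (forall k, k != i -> k != j -> G k = 0) ->
    \sum_k G k = G i + G j.
  move=> G0; rewrite (bigD1 i) //= (bigD1 j) 1?eq_sym //= big1 ?addr0 //.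
  by move=> k /andP[ki kj]; apply: G0.
rewrite mxE sum2 => [|k ki kj]; last by rewrite !mxE (negPf ki) (negPf kj) mulr0.
rewrite !mxE !sum2 => [|k ki kj|k ki kj].
  by rewrite !mxE eqxx eq_sym (negPf ij) eqxx; congr (0 <= _); ring.
all: by rewrite !mxE (negPf ki) (negPf kj) rmorph0 mul0r.
Qed.

Lemma psd_diag_ge0 i : 0 <= A i i.
Proof.
case: A_psd => _ /(_ (\col_k (k == i)%:R)); rewrite mxE (bigD1 i) //= big1 => [|k ki].
  rewrite !mxE (bigD1 i) //= big1 => [|k ki]; last by rewrite !mxE (negPf ki) rmorph0 mul0r.
  by rewrite !mxE eqxx rmorph1 mul1r mulr1 !addr0.
by rewrite !mxE (negPf ki) mulr0.
Qed.

Lemma psd_normCK_le i j : `|A i j| ^+ 2 <= A i i * A j j.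
Proof.
have [<-|ij] := eqVneq i j; first by rewrite ger0_norm ?psd_diag_ge0.
have a_ge0 := psd_diag_ge0 i; have b_ge0 := psd_diag_ge0 j.
have form x y := psd_form2_ge0 x y ij; rewrite (psd_conj i j) in form; rewrite normCK.
set a := A i i in a_ge0 form *; set b := A j j in b_ge0 form *.
set c := A i j in form *.
(* Test the form on (-c, a), (b, -c^* ) or (1, -c^* ), whichever has a nonzero
   diagonal weight; each value is a multiple of  a b - c c^*. *)
have [a_gt0|] := boolP (0 < a).
  have := form (- c) a; rewrite (geC0_conj a_ge0) raddfN /=.
  have -> : - c^* * a * - c + - c^* * c * a + a * c^* * - c + a * b * a
            = a * (a * b - c * c^*) by ring.
  by rewrite pmulr_rge0 // subr_ge0.
rewrite lt_def a_ge0 andbT negbK => /eqP a0.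
have [b_gt0|] := boolP (0 < b).
  have := form b (- c^*); rewrite (geC0_conj b_ge0) raddfN /= conjCK.
  have -> : b * a * b + b * c * - c^* + - c * c^* * b + - c * b * - c^*
            = b * (a * b - c * c^*) by ring.
  by rewrite pmulr_rge0 // subr_ge0.
rewrite lt_def b_ge0 andbT negbK => /eqP b0.
have := form 1 (- c^*); rewrite a0 b0 raddfN /= conjCK rmorph1 mul0r.
have -> : 1 * 0 * 1 + 1 * c * - c^* + - c * c^* * 1 + - c * 0 * - c^*
          = - (c * c^* + c * c^*) by ring.
by rewrite oppr_ge0 => /(le_trans _)-> //; rewrite lerDl mul_conjC_ge0.
Qed.

End PositiveSemidefinite.

Section DephasedRatios.
Variable C : numClosedFieldType.

Definition invsqrt_dephase {d} (A : 'M[C]_d) i :=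
  if A i i == 0 then 0 else (sqrtC (A i i))^-1.

Lemma RmatE d (A : 'M[C]_d) i j :
  Rmat A i j = invsqrt_dephase A i * A i j * invsqrt_dephase A j.
Proof.
by rewrite /Rmat /invsqrt_diag /dephase mul_mx_diag mul_diag_mx !mxE !eqxx !mulr1n.
Qed.

Lemma Rmat_diag d (A : 'M[C]_d) i : Rmat A i i = (A i i != 0)%:R.
Proof.
rewrite RmatE /invsqrt_dephase; case: eqP => [->|/eqP a0]; first by rewrite !mulr0.
have s0 : sqrtC (A i i) != 0 by rewrite sqrtC_eq0.
by rewrite /= -{2}(sqrtCK (A i i)) expr2; field.
Qed.

Lemma norm_Rmat_sym d (A : 'M[C]_d) i j : is_psd A -> `|Rmat A i j| = `|Rmat A j i|.
Proof. by move=> A_psd; rewrite !RmatE psd_conj // !normrM norm_conjC; ring. Qed.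

Lemma norm_Rmat_le1 d (A : 'M[C]_d) i j : is_psd A -> `|Rmat A i j| <= 1.
Proof.
move=> A_psd; rewrite RmatE /invsqrt_dephase.
case: eqP => [_|/eqP a0]; first by rewrite !mul0r normr0 ler01.
case: eqP => [_|/eqP b0]; first by rewrite mulr0 normr0 ler01.
have a_gt0 : 0 < A i i by rewrite lt_def a0 psd_diag_ge0.
have b_gt0 : 0 < A j j by rewrite lt_def b0 psd_diag_ge0.
have norm_sqrtC x : 0 <= x -> `|sqrtC x| = sqrtC x.
  by move=> x_ge0; rewrite ger0_norm ?sqrtC_ge0.
rewrite !normrM !normfV !norm_sqrtC ?psd_diag_ge0 //.
rewrite -(@expr_le1 _ 2) ?mulr_ge0 ?invr_ge0 ?sqrtC_ge0 ?psd_diag_ge0 //.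
rewrite !exprMn !exprVn !sqrtCK mulrAC -invfM mulrC.
by rewrite ler_pdivrMr ?mulr_gt0 // mul1r psd_normCK_le.
Qed.

Lemma Rmat_tens m n (A : 'M[C]_m) (B : 'M[C]_n) i j k l :
  (forall i, 0 <= A i i) ->
  Rmat (A *t B) (mxtens_index (i, k)) (mxtens_index (j, l)) = Rmat A i j * Rmat B k l.
Proof.
move=> A_ge0.
have w_tens i' k' : invsqrt_dephase (A *t B) (mxtens_index (i', k'))
                    = invsqrt_dephase A i' * invsqrt_dephase B k'.
  rewrite /invsqrt_dephase tensmxE mulf_eq0.
  case: eqP => [_|/eqP a0] /=; first by rewrite mul0r.
  case: eqP => [_|/eqP b0] /=; first by rewrite mulr0.
  by rewrite rootCMl ?invfM.
by rewrite !RmatE !w_tens tensmxE; ring.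
Qed.

End DephasedRatios.

Section Lambda.
Variables (C : numClosedFieldType) (d : nat) (A : 'M[C]_d).

Lemma lambda_ge0 : 0 <= lambda A.
Proof. by do 2!apply: bigmax0_ge0 => ? _. Qed.

Lemma lambda_le x : 0 <= x ->
  (forall i j : 'I_d, (i < j)%N -> `|Rmat A i j| < 1 -> `|Rmat A i j| <= x) ->
  lambda A <= x.
Proof.
move=> x_ge0 Rx; apply: bigmax0_le => // [i _|i _]; first exact: bigmax0_ge0.
by apply: bigmax0_le => // j /andP[]; apply: Rx.
Qed.

Lemma le_lambda_lt (i j : 'I_d) : (i < j)%N -> `|Rmat A i j| < 1 ->
  `|Rmat A i j| <= lambda A.
Proof.
move=> ij R_lt1; apply: le_trans (le_bigmax0 _ (mem_index_enum i) isT).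
  by apply: (le_bigmax0 (F := fun k => `|Rmat A i k|)); rewrite ?mem_index_enum ?ij.
by move=> ? _; apply: bigmax0_ge0.
Qed.

Lemma le_lambda i j : is_psd A -> `|Rmat A i j| < 1 -> `|Rmat A i j| <= lambda A.
Proof.
move=> A_psd; case: (ltngtP i j) => [ij|ji|/val_inj<-]; first exact: le_lambda_lt.
  by rewrite norm_Rmat_sym //; apply: le_lambda_lt.
by rewrite Rmat_diag; case: (_ != 0); rewrite ?normr0 ?lambda_ge0 ?normr1 ?ltxx.
Qed.

End Lambda.

Lemma state_diag_neq0 (C : numClosedFieldType) d (A : 'M[C]_d) :
  is_state A -> exists k, A k k != 0.
Proof.
case=> _ tr1; have [k|A0] := pickP (fun k => A k k != 0); first by exists k.
move: tr1; rewrite /mxtrace big1 => [/eqP|i _]; first by rewrite eq_sym oner_eq0.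
by apply/eqP/negbFE.
Qed.

Section LambdaTensor.
Variables (C : numClosedFieldType) (m n : nat) (rho : 'M[C]_m) (sigma : 'M[C]_n).
Hypotheses (rho_state : is_state rho) (sigma_state : is_state sigma).

Let rho_psd : is_psd rho. Proof. by case: rho_state. Qed.
Let sigma_psd : is_psd sigma. Proof. by case: sigma_state. Qed.
Let rho_diag_ge0 i : 0 <= rho i i. Proof. exact: psd_diag_ge0. Qed.

Lemma lambda_tens_le_max : lambda (rho *t sigma) <= Num.max (lambda rho) (lambda sigma).
Proof.
have cmp : lambda rho >=< lambda sigma by rewrite real_comparable ?ger0_real ?lambda_ge0.
apply: lambda_le => [|p q _]; first by rewrite comparable_le_max ?lambda_ge0.
case: (mxtens_indexP p) => i k; case: (mxtens_indexP q) => j l.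
rewrite Rmat_tens // normrM comparable_le_max //.
have a_le1 := norm_Rmat_le1 i j rho_psd; have b_le1 := norm_Rmat_le1 k l sigma_psd.
have [a_lt1 _|a_ge1] := boolP (`|Rmat rho i j| < 1).
  apply/orP; left; apply: le_trans (le_lambda rho_psd a_lt1).
  exact: ler_piMr b_le1.
have [b_lt1 _|b_ge1] := boolP (`|Rmat sigma k l| < 1).
  apply/orP; right; apply: le_trans (le_lambda sigma_psd b_lt1).
  exact: ler_piMl a_le1.
rewrite -!real_leNgt ?realE ?ler01 ?normr_ge0 // in a_ge1 b_ge1.
by rewrite le_gtF ?mulr_ege1.
Qed.

Lemma lambda_le_tensl : lambda rho <= lambda (rho *t sigma).
Proof.
have [k sigma_k] := state_diag_neq0 sigma_state.
apply: lambda_le => [|i j ij]; first exact: lambda_ge0.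
have <- : Rmat (rho *t sigma) (mxtens_index (i, k)) (mxtens_index (j, k)) = Rmat rho i j.
  by rewrite Rmat_tens // Rmat_diag sigma_k mulr1.
by apply: le_lambda_lt; rewrite /= ltn_add2r ltn_pmul2r // (leq_ltn_trans _ (ltn_ord k)).
Qed.

Lemma lambda_le_tensr : lambda sigma <= lambda (rho *t sigma).
Proof.
have [i rho_i] := state_diag_neq0 rho_state.
apply: lambda_le => [|k l kl]; first exact: lambda_ge0.
have <- : Rmat (rho *t sigma) (mxtens_index (i, k)) (mxtens_index (i, l)) = Rmat sigma k l.
  by rewrite Rmat_tens // Rmat_diag rho_i mul1r.
by apply: le_lambda_lt; rewrite /= ltn_add2l.
Qed.

End LambdaTensor.

Theorem lemma6 (C : numClosedFieldType) (m n : nat)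
  (rho : 'M[C]_m) (sigma : 'M[C]_n) :
  is_state rho -> is_state sigma ->
  lambda (rho *t sigma) = Num.max (lambda rho) (lambda sigma).
Proof.
move=> rho_state sigma_state.
have cmp : lambda rho >=< lambda sigma by rewrite real_comparable ?ger0_real ?lambda_ge0.
apply: le_anti; rewrite lambda_tens_le_max // comparable_ge_max //.
by rewrite lambda_le_tensl ?lambda_le_tensr.
Qed.
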